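(* Let $n$ be a positive integer and let $z$ be a complex number such that all denominators below are nonzero. Then $$\sum_{k=1}^n\binom{2k}{k}(3k-2n+z)\,\frac{\prod_{j=1}^{k-1}(j-n)(j-n+z)}{\prod_{j=1}^{k}(j^2-z^2)}=\frac{2}{n-z},$$ and $$\sum_{k=n}^{\infty}\frac{3k-2n+z}{k\binom{2k}{k}}\cdot\frac{\prod_{j=1}^{k-1}(j^2-z^2)}{\prod_{j=1,\,j\neq n}^{k}(j-n)(j-n+z)}=1.$$ *)

From HB Require Import structures.
From mathcomp Require Import all_boot all_order all_algebra.
From mathcomp Require Import all_classical all_reals all_analysis.
From mathcomp Require Export complex.
Import Order.TTheory GRing.Theory Num.Theory.
Import numFieldTopology.Exports numFieldNormedType.Exports.
Local Open Scope ring_scope.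

(* Equip R[i] with its standard (modulus) topology and normed-module
   structure, copied from the generic numFieldType instances on R[i]^o. *)
HB.instance Definition _ (R : rcfType) := PseudoPointedMetric.copy R[i] (R[i])^o.
HB.instance Definition _ (R : rcfType) := NormedModule.copy R[i] (R[i])^o.

(* Both identities are proved by Wilf-Zeilberger telescoping.
   For the finite sum, let F(n,k) be its k-th term and
     G(n,k) = k C(2k,k) prod_(1<=j<k) (j-n-1)(j-n-1+z) / prod_(1<=j<k) (j^2-z^2);
   then n(n-z)F(n,k) - (n+1)(n+1-z)F(n+1,k) = G(n,k+1) - G(n,k), so summing over
   k shows that n(n-z) sum_k F(n,k) increases by exactly G(n,1) = 2 from n to n+1.
   For the series, let b(i,k) be its k-th term with n replaced by i, and
     T(i,N) = prod_(1<=j<N) (j^2-z^2) / (C(2N-2,N-1) prod_(1<=j<N, j<>i) (j-i)(j-i+z)).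
   The partial sums S(i,N) = sum_(i<=k<N) b(i,k) satisfy S(1,N) = 1 - T(0,N) and
   S(i+1,N) = S(i,N) - T(i,N)/(i(i-z)), again by telescoping in k. Since
   T(i,N+1)/T(i,N) tends to 1/4, every T(i,N) tends to 0, hence S(n,N) tends to 1. *)

From HB Require Import structures.
From mathcomp Require Import all_boot all_order all_algebra.
From mathcomp Require Import all_classical all_reals all_analysis.
From mathcomp Require Import complex.
From mathcomp Require Import ring lra zify.
Import Order.TTheory GRing.Theory Num.Theory.
Import numFieldTopology.Exports numFieldNormedType.Exports.
Local Open Scope ring_scope.
Local Open Scope classical_set_scope.

Lemma central_bin_rec k :
  (k.+1 * 'C(k.+1.*2, k.+1) = 2 * k.*2.+1 * 'C(k.*2, k))%N.
Proof.
have sym : 'C(k.*2.+1, k) = 'C(k.*2.+1, k.+1).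
  rewrite -[in RHS]bin_sub -addnn; first by congr 'C(_, _); lia.
  by rewrite ltnS leq_addr.
rewrite -(mul_bin_diag k.+1.*2) -mulnA (mul_bin_diag k.*2.+1) /= sym.
by rewrite -!muln2; lia.
Qed.

Section Products.
Context {F : fieldType}.
Implicit Types (z : F) (n j k : nat).

Definition cbin k : F := 'C(k.*2, k)%:R.
Definition sfactor n z j := (j%:R - n%:R) * (j%:R - n%:R + z).
Definition qprod z k := \prod_(1 <= j < k) (j%:R ^+ 2 - z ^+ 2).
Definition sprod n z k := \prod_(1 <= j < k) sfactor n z j.
Definition sprod_skip n z k := \prod_(1 <= j < k | j != n) sfactor n z j.

Lemma mulr_cbinS k : k.+1%:R * cbin k.+1 = 2%:R * (2%:R * k%:R + 1) * cbin k.
Proof.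
rewrite /cbin -natrM central_bin_rec -[k.*2.+1]addn1 -muln2 !(natrM, natrD).
by rewrite [k%:R * _]mulrC.
Qed.

Lemma sfactor0 n z : sfactor n z 0 = n%:R * (n%:R - z).
Proof. rewrite /sfactor; ring. Qed.

Lemma sfactor_addn n m z j : sfactor (n + m) z (j + m) = sfactor n z j.
Proof. rewrite /sfactor !natrD; ring. Qed.

Lemma sfactorSS n z j : sfactor n.+1 z j.+1 = sfactor n z j.
Proof. by rewrite -addn1 -[j.+1]addn1 sfactor_addn. Qed.

Lemma qprodS z k : (0 < k)%N -> qprod z k.+1 = qprod z k * (k%:R ^+ 2 - z ^+ 2).
Proof. by move=> k_gt0; rewrite /qprod big_nat_recr. Qed.

Lemma sprodS n z k : (0 < k)%N -> sprod n z k.+1 = sprod n z k * sfactor n z k.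
Proof. by move=> k_gt0; rewrite /sprod big_nat_recr. Qed.

Lemma qprod_neq0 z k :
  (forall j, (1 <= j < k)%N -> j%:R ^+ 2 - z ^+ 2 != 0) -> qprod z k != 0.
Proof.
move=> nz; rewrite /qprod prodf_seq_neq0; apply/allP => j.
by rewrite mem_index_iota => /nz.
Qed.

Lemma sprod_eq0 n z k : (0 < n < k)%N -> sprod n z k = 0.
Proof.
move=> ltnk; apply/eqP; rewrite /sprod prodf_seq_eq0; apply/hasP; exists n.
  by rewrite mem_index_iota.
by rewrite /= /sfactor subrr mul0r.
Qed.

Lemma sprod_shift n z k : (0 < k)%N ->
  sprod n.+1 z k.+1 = sfactor n z 0 * sprod n z k.
Proof.
move=> k_gt0; rewrite /sprod big_add1 /= big_ltn //.
by under eq_bigr do rewrite sfactorSS; rewrite sfactorSS.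
Qed.

End Products.

Section WZPair.
Context {F : fieldType}.
Implicit Types (z : F) (n k : nat).

Definition wzF n z k :=
  cbin k * (3%:R * k%:R - 2%:R * n%:R + z) * sprod n z k / qprod z k.+1.
Definition wzG n z k := k%:R * cbin k * sprod n.+1 z k / qprod z k.

Lemma wzF_sub_wzF n z k : qprod z k.+2 != 0 ->
  n%:R * (n%:R - z) * wzF n z k.+1 - n.+1%:R * (n.+1%:R - z) * wzF n.+1 z k.+1
  = wzG n z k.+2 - wzG n z k.+1.
Proof.
rewrite qprodS // mulf_eq0 negb_or => /andP[q_nz d_nz].
have shift : n%:R * (n%:R - z) * sprod n z k.+1
    = sprod n.+1 z k.+1 * sfactor n.+1 z k.+1.
  by rewrite -sfactor0 -sprod_shift // sprodS //.
have -> : n%:R * (n%:R - z) * wzF n z k.+1 = cbin k.+1 *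
    (3%:R * k.+1%:R - 2%:R * n%:R + z) / qprod z k.+2 * (n%:R * (n%:R - z) * sprod n z k.+1).
  rewrite /wzF; ring.
rewrite /wzF /wzG shift [sprod n.+1 z k.+2]sprodS // mulr_cbinS [qprod z k.+2]qprodS //.
rewrite /sfactor -!natr1 in d_nz *.
by field; rewrite q_nz d_nz.
Qed.

Lemma wzF_last n z : n%:R * (n%:R - z) * wzF n z n.+1 = 0.
Proof.
case: n => [|n]; first by rewrite !mul0r.
by rewrite /wzF sprod_eq0 ?ltnSn // !(mulr0, mul0r).
Qed.

Lemma wzG_last n z : wzG n z n.+2 = 0.
Proof. by rewrite /wzG sprod_eq0 ?ltnSn // !(mulr0, mul0r). Qed.

Lemma wzG1 n z : wzG n z 1 = 2%:R.
Proof. by rewrite /wzG /sprod /qprod !big_geq // mul1r mulr1 divr1. Qed.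

Lemma sum_wzF_scaled n z :
  (forall j, (1 <= j <= n)%N -> j%:R ^+ 2 - z ^+ 2 != 0) ->
  \sum_(1 <= k < n.+1) n%:R * (n%:R - z) * wzF n z k = 2%:R * n%:R.
Proof.
elim: n => [|n IH] nz; first by rewrite big_geq ?mulr0.
have pair k : (1 <= k < n.+2)%N -> n.+1%:R * (n.+1%:R - z) * wzF n.+1 z k =
    n%:R * (n%:R - z) * wzF n z k - (wzG n z k.+1 - wzG n z k).
  case: k => // k /= lt_k; rewrite -wzF_sub_wzF; first by ring.
  apply: qprod_neq0 => j /andP[j_gt0 lt_j].
  by apply: nz; rewrite j_gt0 -ltnS (leq_trans lt_j).
rewrite (eq_big_nat _ _ pair) sumrB telescope_sumr // big_nat_recr //= IH; last first.
  by move=> j /andP[j_gt0 le_j]; apply: nz; rewrite j_gt0 ltnW.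
rewrite wzF_last wzG_last wzG1 -natr1; ring.
Qed.

Lemma sum_wzF n z : n%:R != 0 :> F -> n%:R - z != 0 ->
  (forall j, (1 <= j <= n)%N -> j%:R ^+ 2 - z ^+ 2 != 0) ->
  \sum_(1 <= k < n.+1) wzF n z k = 2%:R / (n%:R - z).
Proof.
move=> n_nz nz_nz /sum_wzF_scaled; rewrite -mulr_sumr => scaled.
apply: (mulfI (mulf_neq0 n_nz nz_nz)); rewrite scaled; field.
by rewrite nz_nz.
Qed.

End WZPair.

Section SeriesTerms.
Context {F : fieldType}.
Implicit Types (z : F) (n j k : nat).

Definition bterm n z k :=
  (3%:R * k%:R - 2%:R * n%:R + z) / (k%:R * cbin k) * qprod z k / sprod_skip n z k.+1.
Definition btail n z k := qprod z k / (cbin k.-1 * sprod_skip n z k).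
Definition sfactors_neq0 n z := forall j, (1 <= j)%N -> j != n -> sfactor n z j != 0.

Lemma sprod_skipS n z k : (0 < k)%N -> k != n ->
  sprod_skip n z k.+1 = sprod_skip n z k * sfactor n z k.
Proof.
by move=> k_gt0 ne_kn; rewrite /sprod_skip big_mkcond big_nat_recr //= ne_kn -big_mkcond.
Qed.

Lemma sprod_skip_shift n z k : (0 < n)%N -> (0 < k)%N ->
  sprod_skip n.+1 z k.+1 = sfactor n z 0 * sprod_skip n z k.
Proof.
move=> n_gt0 k_gt0; rewrite /sprod_skip big_add1 /= big_ltn_cond // eq_sym -lt0n n_gt0.
by under eq_bigr do rewrite sfactorSS; rewrite sfactorSS.
Qed.

Lemma sprod_skip1S z k : sprod_skip 1 z k.+1 = sprod_skip 0 z k.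
Proof.
rewrite /sprod_skip big_add1 /=; case: k => [|k]; first by rewrite !big_geq.
by rewrite big_ltn_cond //=; under eq_bigr do rewrite sfactorSS.
Qed.

Lemma sprod_skip_neq0 n z k : sfactors_neq0 n z -> sprod_skip n z k != 0.
Proof.
move=> nz; rewrite /sprod_skip prodf_seq_neq0; apply/allP => j.
by rewrite mem_index_iota => /andP[j_gt0 _]; apply/implyP; apply: nz.
Qed.

Lemma sfactors_neq0_le n i z : sfactors_neq0 n z -> (i <= n)%N -> sfactors_neq0 i z.
Proof.
move=> nz le_in j j_gt0 ne_ji; rewrite -(sfactor_addn i (n - i)) subnKC //.
by apply: nz; lia.
Qed.

Lemma sfactor0_neq0 n i z : sfactors_neq0 n z -> (0 < i < n)%N -> sfactor i z 0 != 0.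
Proof.
move=> nz /andP[i_gt0 lt_in].
by rewrite -(sfactor_addn i (n - i)) subnKC ?(ltnW lt_in) //; apply: nz; lia.
Qed.

End SeriesTerms.

Section SeriesIdentities.
Context {F : numFieldType}.
Implicit Types (z : F) (n i k N : nat).

Lemma cbin_neq0 k : cbin k != 0 :> F.
Proof. by rewrite pnatr_eq0 -lt0n bin_gt0 -addnn leq_addr. Qed.

Lemma cbinS k : cbin k.+1 = 2%:R * (2%:R * k%:R + 1) * cbin k / k.+1%:R :> F.
Proof. by rewrite -mulr_cbinS mulrC mulKf ?pnatr_eq0. Qed.

Lemma double_natS_neq0 k : 2%:R * k%:R + 1 != 0 :> F.
Proof. by rewrite -natrM natr1 pnatr_eq0. Qed.

Lemma bterm1E z k : sfactors_neq0 0 z ->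
  bterm 1 z k.+1 = btail 0 z k.+1 - btail 0 z k.+2.
Proof.
move=> nz; have D_nz : sprod_skip 0 z k.+1 != 0 by apply: sprod_skip_neq0.
have f_nz : sfactor 0 z k.+1 != 0 by apply: nz.
rewrite /bterm /btail /= sprod_skip1S [sprod_skip 0 z k.+2]sprod_skipS //.
rewrite [qprod z k.+2]qprodS // cbinS.
move: f_nz; rewrite /sfactor subr0 mulf_eq0 negb_or => /andP[k_nz kz_nz].
have c_nz : 'C(k.*2, k)%:R != 0 :> F := cbin_neq0 k.
rewrite -!natr1 in k_nz kz_nz *.
by field; rewrite k_nz kz_nz D_nz c_nz double_natS_neq0.
Qed.

Lemma bterm_sub i z k : (0 < i <= k)%N -> sfactors_neq0 i z -> sfactor i z 0 != 0 ->
  bterm i z k.+1 - bterm i.+1 z k.+1 = (btail i z k.+2 - btail i z k.+1) / sfactor i z 0.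
Proof.
move=> /andP[i_gt0 le_ik] nz p_nz.
have ne_ki : k.+1 != i by rewrite gtn_eqF.
have D_nz : sprod_skip i z k.+1 != 0 by apply: sprod_skip_neq0.
have f_nz : sfactor i z k.+1 != 0 by apply: nz.
rewrite /bterm /btail /= sprod_skip_shift // [sprod_skip i z k.+2]sprod_skipS //.
rewrite [qprod z k.+2]qprodS // cbinS.
move: f_nz p_nz; rewrite sfactor0 /sfactor !mulf_eq0 !negb_or.
move=> /andP[ki_nz kiz_nz] /andP[i_nz iz_nz].
have c_nz : 'C(k.*2, k)%:R != 0 :> F := cbin_neq0 k.
have k_nz : k%:R + 1 != 0 :> F by rewrite natr1 pnatr_eq0.
rewrite -!natr1 in ki_nz kiz_nz *.
by field; rewrite ki_nz kiz_nz i_nz iz_nz D_nz c_nz k_nz double_natS_neq0.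
Qed.

Lemma bterm_diag i z : (0 < i)%N -> sfactors_neq0 i z -> sfactor i z 0 != 0 ->
  bterm i z i = btail i z i.+1 / sfactor i z 0.
Proof.
move=> i_gt0 nz p_nz.
have D_nz : sprod_skip i z i.+1 != 0 by apply: sprod_skip_neq0.
rewrite /bterm /btail /= qprodS //.
move: p_nz; rewrite sfactor0 mulf_eq0 negb_or => /andP[i_nz iz_nz].
have c_nz : 'C(i.*2, i)%:R != 0 :> F := cbin_neq0 i.
by field; rewrite i_nz iz_nz D_nz c_nz.
Qed.

Lemma btail_ratio n z k : sfactors_neq0 n z -> k.+1 != n ->
  btail n z k.+2 * (2%:R * (2%:R * k%:R + 1) * sfactor n z k.+1)
  = btail n z k.+1 * (k.+1%:R * (k.+1%:R ^+ 2 - z ^+ 2)).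
Proof.
move=> nz ne_kn.
have D_nz : sprod_skip n z k.+1 != 0 by apply: sprod_skip_neq0.
have f_nz : sfactor n z k.+1 != 0 by apply: nz.
rewrite /btail /= [sprod_skip n z k.+2]sprod_skipS // [qprod z k.+2]qprodS // cbinS.
have c_nz : 'C(k.*2, k)%:R != 0 :> F := cbin_neq0 k.
have k_nz : k.+1%:R != 0 :> F by rewrite pnatr_eq0.
move: f_nz; rewrite /sfactor mulf_eq0 negb_or => /andP[f1_nz f2_nz].
rewrite -!natr1 in f1_nz f2_nz k_nz *.
by field; rewrite f1_nz f2_nz D_nz c_nz k_nz double_natS_neq0.
Qed.

Lemma sum_bterm1 z N : sfactors_neq0 0 z -> (0 < N)%N ->
  \sum_(1 <= k < N) bterm 1 z k = 1 - btail 0 z N.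
Proof.
move=> nz N_gt0.
rewrite (telescope_sumr_eq (fun k => - btail 0 z k)) //; last first.
  by move=> [//|k] _; rewrite bterm1E // opprK addrC.
suff -> : btail 0 z 1 = 1 by rewrite opprK addrC.
rewrite /btail /qprod /sprod_skip !big_geq //.
by rewrite /cbin /= !mul1r invr1.
Qed.

Lemma sum_btermS i z N : (0 < i < N)%N -> sfactors_neq0 i z -> sfactor i z 0 != 0 ->
  \sum_(i.+1 <= k < N) bterm i.+1 z k
  = \sum_(i <= k < N) bterm i z k - btail i z N / sfactor i z 0.
Proof.
move=> /andP[i_gt0 lt_iN] nz p_nz.
have tele : \sum_(i.+1 <= k < N) (bterm i z k - bterm i.+1 z k)
    = btail i z N / sfactor i z 0 - btail i z i.+1 / sfactor i z 0.
  apply: (telescope_sumr_eq (fun k => btail i z k / sfactor i z 0)) => //.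
  by move=> [//|k] /andP[lt_ik _]; rewrite bterm_sub ?mulrBl ?i_gt0.
rewrite sumrB in tele; rewrite [\sum_(i <= k < N) _]big_ltn // bterm_diag //.
have -> : \sum_(i.+1 <= k < N) bterm i.+1 z k
    = \sum_(i.+1 <= k < N) bterm i z k
      - (btail i z N / sfactor i z 0 - btail i z i.+1 / sfactor i z 0).
  by rewrite -tele subKr.
ring.
Qed.

End SeriesIdentities.

Section ComplexSequences.
Context {R : realType}.

Lemma complex_archi (x : R[i]) : 0 <= x -> exists p : nat, x < p%:R.
Proof.
case: x => a b /andP[/= /eqP-> a_ge0].
by exists (Num.Def.archi_bound a); rewrite -(rmorph_nat (real_complex R)) ltcR archi_boundP.
Qed.

Lemma cvg0_ratio_half (u : nat -> R[i]) m0 :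
  (forall m, (m0 <= m)%N -> `|u m.+1| <= `|u m| / 2%:R) -> u @ \oo --> 0.
Proof.
move=> half.
have geom p : `|u (m0 + p)%N| <= `|u m0| / 2%:R ^+ p.
  elim: p => [|p IH]; first by rewrite addn0 expr0 divr1.
  rewrite addnS (le_trans (half _ (leq_addr _ _))) // exprSr invfM mulrA.
  by rewrite ler_pM2r ?invr_gt0 ?ltr0n.
apply/cvgrPdist_lt => e e_gt0.
have [p0 ltp0] : exists p : nat, `|u m0| / e < p%:R.
  by apply: complex_archi; rewrite divr_ge0 // ltW.
exists (m0 + p0)%N => // N /= le_N.
rewrite sub0r normrN -(subnKC (leq_trans (leq_addr _ _) le_N)).
apply: (le_lt_trans (geom _)).
rewrite ltr_pdivrMr ?exprn_gt0 ?ltr0n // -ltr_pdivrMl // mulrC.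
apply: (lt_le_trans ltp0); rewrite -natrX ler_nat.
by apply: ltnW; apply: (leq_trans _ (ltn_expl _ (isT : 1 < 2)%N)); lia.
Qed.

End ComplexSequences.

Lemma cubic_le {R : realFieldType} {x a r : R} : 0 <= a -> 0 <= r ->
  8%:R * (a + r + 1) <= x -> x * (x ^+ 2 + r ^+ 2) <= (2%:R * x - 1) * (x - a) * (x - a - r).
Proof.
move=> a_ge0 r_ge0 x_ge.
(* (15/8) (49/64) = 735/512 exceeds 65/64, while r <= x/8 gives x^2 + r^2 <= (65/64) x^2. *)
have x_ge0 : 0 <= x by lra.
have h1 : 7%:R * x <= 8%:R * (x - a - r) by lra.
have h2 : 15%:R * x <= 8%:R * (2%:R * x - 1) by lra.
have e1 : 49%:R * x ^+ 2 <= 64%:R * ((x - a) * (x - a - r)) by nra.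
have e2 : 735%:R * x ^+ 3 <= 512%:R * ((2%:R * x - 1) * ((x - a) * (x - a - r))).
  have := ler_pM (mulr_ge0 (ler0n _ 15) x_ge0) (mulr_ge0 (ler0n _ 49) (sqr_ge0 x)) h2 e1.
  have : 0 <= (x - a) * (x - a - r) by nra.
  nra.
have : 64%:R * r ^+ 2 <= x ^+ 2 by nra.
nra.
Qed.

Section SeriesLimit.
Context {R : realType}.

Lemma ratio_le_eventually n (z : R[i]) : exists N, forall k, (N <= k)%N ->
  `|k.+1%:R * (k.+1%:R ^+ 2 - z ^+ 2)|
    <= `|2%:R * (2%:R * k%:R + 1) * sfactor n z k.+1| / 2%:R.
Proof.
have [r r_ge0 normz] : exists2 r : R, 0 <= r & `|z| = r%:C%C.
  rewrite normc_def.
  by exists (Num.sqrt (complex.Re z ^+ 2 + complex.Im z ^+ 2)); rewrite ?sqrtr_ge0.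
exists (Num.Def.archi_bound (8%:R * (n%:R + r + 1))) => k le_Nk.
have n_ge0 := ler0n R n.
have x_ge : 8%:R * (n%:R + r + 1) <= k.+1%:R :> R.
  apply/ltW/(lt_le_trans (archi_boundP _)); last by rewrite ler_nat ltnW.
  by rewrite mulr_ge0 // !addr_ge0.
have lt_nk : (n < k.+1)%N by rewrite -(ltr_nat R); lra.
have xnz_gt0 : 0 < k.+1%:R - n%:R - `|z| :> R[i].
  have : (0 : R) < k.+1%:R - n%:R - r by lra.
  by rewrite -ltcR !(rmorph0, rmorphB, rmorph_nat) normz.
have cubic : k.+1%:R * (k.+1%:R ^+ 2 + `|z| ^+ 2)
    <= (2%:R * k%:R + 1) * (k.+1%:R - n%:R) * (k.+1%:R - n%:R - `|z|) :> R[i].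
  have -> : 2%:R * k%:R + 1 = 2%:R * k.+1%:R - 1 :> R[i] by rewrite -natr1; ring.
  have := cubic_le n_ge0 r_ge0 x_ge.
  by rewrite -lecR !(rmorphM, rmorphB, rmorphD, rmorphXn, rmorph_nat, rmorph1) normz.
have kn_gt0 : 0 < k.+1%:R - n%:R :> R[i] by rewrite subr_gt0 ltr_nat.
have two_k_gt0 : 0 < 2%:R * k%:R + 1 :> R[i] by rewrite -natrM natr1 ltr0n.
have lower : k.+1%:R - n%:R - `|z| <= `|k.+1%:R - n%:R + z|.
  by have := lerB_normD (k.+1%:R - n%:R) z; rewrite gtr0_norm.
apply: le_trans (le_trans cubic _).
  rewrite normrM normr_nat ler_wpM2l // (le_trans (ler_normB _ _)) //.
  by rewrite !normrX normr_nat.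
rewrite /sfactor !normrM normr_nat (gtr0_norm kn_gt0) (gtr0_norm two_k_gt0).
have -> : 2%:R * (2%:R * k%:R + 1) * ((k.+1%:R - n%:R) * `|k.+1%:R - n%:R + z|) / 2%:R
    = (2%:R * k%:R + 1) * (k.+1%:R - n%:R) * `|k.+1%:R - n%:R + z| :> R[i] by field.
by rewrite ler_wpM2l // mulr_ge0 // ltW.
Qed.

Lemma btail_cvg0 n (z : R[i]) : sfactors_neq0 n z -> btail n z @ \oo --> 0.
Proof.
move=> nz; have [N ratio] := ratio_le_eventually n z.
apply: (@cvg0_ratio_half _ _ (maxn N n).+1) => -[//|k].
rewrite ltnS geq_max => /andP[le_Nk le_nk].
have ne_kn : k.+1 != n by rewrite gtn_eqF // ltnS.
have f_nz : sfactor n z k.+1 != 0 by apply: nz.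
have A_gt0 : 0 < `|2%:R * (2%:R * k%:R + 1) * sfactor n z k.+1|.
  by rewrite normr_gt0 mulf_neq0 // mulf_neq0 ?pnatr_eq0 ?double_natS_neq0.
rewrite -(ler_pM2r A_gt0) -normrM btail_ratio // normrM.
by rewrite mulrAC -mulrA ler_wpM2l ?ratio.
Qed.

Lemma cvg_sum_bterm n (z : R[i]) i : sfactors_neq0 n z -> (0 < i <= n)%N ->
  (fun N => \sum_(i <= k < N) bterm i z k) @ \oo --> (1 : R[i]).
Proof.
move=> nz; elim: i => [//|[_ _|i IH /andP[_ lt_in]]].
  have nz0 : sfactors_neq0 0 z by apply: sfactors_neq0_le nz _.
  have tail0 : btail 0 z @ \oo --> 0 by apply: btail_cvg0.
  have lim : (fun N => 1 - btail 0 z N) @ \oo --> (1 : R[i]).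
    by rewrite -[X in _ --> X]subr0; apply: cvgB tail0; apply: cvg_cst.
  apply: (cvg_trans _ lim); apply: near_eq_cvg; exists 1%N => // N /= N_gt0.
  by rewrite sum_bterm1.
have nzi : sfactors_neq0 i.+1 z by apply: sfactors_neq0_le nz (ltnW lt_in).
have p_nz : sfactor i.+1 z 0 != 0 by apply: sfactor0_neq0 nz _.
have tail : btail i.+1 z @ \oo --> 0 by apply: btail_cvg0.
have lim : (fun N => \sum_(i.+1 <= k < N) bterm i.+1 z k - btail i.+1 z N / sfactor i.+1 z 0)
    @ \oo --> (1 : R[i]).
  rewrite -[X in _ --> X]subr0 -[X in _ --> _ - X](mul0r (sfactor i.+1 z 0)^-1).
  by apply: cvgB (IH (ltnW lt_in)) _; apply: cvgM tail (cvg_cst _).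
apply: (cvg_trans _ lim); apply: near_eq_cvg.
by exists i.+2 => // N /= lt_iN; rewrite [RHS]sum_btermS ?lt_iN.
Qed.

End SeriesLimit.

Theorem mainTheorem2 (R : realType) (n : nat) (z : R[i]) (hn : (0 < n)%N) :
  (* first identity: denominators j^2 - z^2 (1 <= j <= n) and n - z nonzero *)
  ((forall j : nat, (1 <= j <= n)%N -> j%:R ^+ 2 - z ^+ 2 != 0) ->
   n%:R - z != 0 ->
   \sum_(1 <= k < n.+1)
      'C(k.*2, k)%:R * (3%:R * k%:R - 2%:R * n%:R + z)
      * (\prod_(1 <= j < k) ((j%:R - n%:R) * (j%:R - n%:R + z)))
      / (\prod_(1 <= j < k.+1) (j%:R ^+ 2 - z ^+ 2))
   = 2%:R / (n%:R - z))
  /\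
  (* second identity: denominators (j - n)(j - n + z), j >= 1, j <> n, nonzero;
     the series over k >= n converges to 1 *)
  ((forall j : nat, (1 <= j)%N -> j != n ->
      (j%:R - n%:R) * (j%:R - n%:R + z) != 0) ->
   (fun N : nat =>
      \sum_(n <= k < N)
        (3%:R * k%:R - 2%:R * n%:R + z) / (k%:R * 'C(k.*2, k)%:R)
        * (\prod_(1 <= j < k) (j%:R ^+ 2 - z ^+ 2))
        / (\prod_(1 <= j < k.+1 | j != n)
              ((j%:R - n%:R) * (j%:R - n%:R + z))))
     @ \oo --> (1 : R[i])).
Proof.
split=> [qz_nz nz_nz | nz].
  by apply: sum_wzF => //; rewrite pnatr_eq0 -lt0n.
by apply: cvg_sum_bterm nz _; rewrite hn leqnn.
Qed.
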